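(* Let $F,E$ be Archimedean vector lattices endowed with locally solid additive convergences and let $T:F\to E$ be a positive linear operator. Let $H=\{h\in F:\ T|_{F_{|h|}}\text{ is order continuous}\}$. Then $H$ is an ideal of $F$ and $T|_{H}$ is order continuous. Moreover, if $T$ is continuous (with respect to the given convergences), then $H$ is closed.
   Context: A convergence on a vector lattice is locally solid additive if addition and $f\mapsto -f$ are continuous and $|e_\alpha|\le|f_\alpha|$, $f_\alpha\to0$ imply $e_\alpha\to0$. $F_{u}=\bigcup_{\lambda\ge0}\lambda[-u,u]$ is the principal ideal generated by $u\in F_+$. A net order converges to $f$ if there is a set $G$ with $\bigwedge G=0$ such that for each $g\in G$ the net is eventually in $[f-g,f+g]$; an operator defined on a sublattice is order continuous if it maps order convergent nets (order convergence in the domain sublattice) to order convergent nets in $E$ with the image of the limit as limit. A set is closed if it contains the limits of all convergent nets in it.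
   Formalization: The closedness of H when T is continuous is claimed only for a Hausdorff convergence on E, one in which each net in E has at most one limit. The statement above fails without it. *)

From HB Require Import structures.
From mathcomp Require Import all_boot all_order all_algebra.
From mathcomp Require Import classical_sets reals.
Set Implicit Arguments. Unset Strict Implicit. Unset Printing Implicit Defensive.
Import Order.TTheory GRing.Theory Num.Theory.
Local Open Scope ring_scope.
Local Open Scope classical_set_scope.

Record vectorLattice (R : realType) := VectorLattice {
  vl_car :> lmodType R;
  vl_le : vl_car -> vl_car -> Prop;
  vl_sup : vl_car -> vl_car -> vl_car;
  vl_le_refl : forall x, vl_le x x;
  vl_le_anti : forall x y, vl_le x y -> vl_le y x -> x = y;
  vl_le_trans : forall x y z, vl_le x y -> vl_le y z -> vl_le x z;
  vl_le_add : forall x y z, vl_le x y -> vl_le (x + z) (y + z);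
  vl_le_scale : forall (a : R) x y, 0 <= a -> vl_le x y -> vl_le (a *: x) (a *: y);
  vl_sup_l : forall x y, vl_le x (vl_sup x y);
  vl_sup_r : forall x y, vl_le y (vl_sup x y);
  vl_sup_least : forall x y z, vl_le x z -> vl_le y z -> vl_le (vl_sup x y) z
}.

Section VL.
Variables (R : realType) (V : vectorLattice R).

Definition vabs (x : V) : V := vl_sup x (- x).

Definition archimedean : Prop :=
  forall x y : V, vl_le 0 x -> (forall n : nat, vl_le (x *+ n) y) -> x = 0.

Definition is_inf_in (S G : set V) (a : V) : Prop :=
  S a /\ (forall g, G g -> vl_le a g) /\
  (forall w, S w -> (forall g, G g -> vl_le w g) -> vl_le w a).

Definition ideal (S : set V) : Prop :=
  S 0 /\ (forall x y, S x -> S y -> S (x + y)) /\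
  (forall (a : R) x, S x -> S (a *: x)) /\
  (forall x y, S y -> vl_le (vabs x) (vabs y) -> S x).

Definition principal_ideal (u : V) : set V :=
  [set x | exists l : R, 0 <= l /\
     exists y, vl_le (- u) y /\ vl_le y u /\ x = l *: y].
End VL.

Definition directed (I : Type) (le : I -> I -> Prop) : Prop :=
  (exists i : I, True) /\ (forall i, le i i) /\
  (forall i j k, le i j -> le j k -> le i k) /\
  (forall i j, exists k, le i k /\ le j k).

Definition eventually (I : Type) (le : I -> I -> Prop) (P : I -> Prop) : Prop :=
  exists i0, forall i, le i0 i -> P i.

Definition oconv_in (R : realType) (V : vectorLattice R) (S : set V)
  (I : Type) (le : I -> I -> Prop) (x : I -> V) (f : V) : Prop :=
  exists G : set V, G `<=` S /\ is_inf_in S G 0 /\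
    forall g, G g -> eventually le (fun i => vl_le (f - g) (x i) /\ vl_le (x i) (f + g)).

Definition order_continuous_on (R : realType) (F E : vectorLattice R)
  (T : F -> E) (S : set F) : Prop :=
  forall (I : Type) (le : I -> I -> Prop), directed le ->
  forall (x : I -> F) (f : F), (forall i, S (x i)) -> S f ->
    oconv_in S le x f -> oconv_in [set: E] le (fun i => T (x i)) (T f).

Definition positive_op (R : realType) (F E : vectorLattice R) (T : F -> E) :=
  forall x : F, vl_le 0 x -> vl_le 0 (T x).

Definition net_conv (V : Type) :=
  forall I : Type, (I -> I -> Prop) -> (I -> V) -> V -> Prop.

Definition is_convergence (V : Type) (c : net_conv V) : Prop :=
  forall (I : Type) (le : I -> I -> Prop), directed le ->
  forall v : V, c I le (fun _ => v) v.

Definition hausdorff (V : Type) (c : net_conv V) : Prop :=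
  forall (I : Type) (le : I -> I -> Prop), directed le ->
  forall (x : I -> V) (a b : V), c I le x a -> c I le x b -> a = b.

Definition locally_solid_additive (R : realType) (V : vectorLattice R)
  (c : net_conv V) : Prop :=
  (forall (I : Type) (le : I -> I -> Prop), directed le ->
     forall (x y : I -> V) (f g : V), c I le x f -> c I le y g ->
       c I le (fun i => x i + y i) (f + g)) /\
  (forall (I : Type) (le : I -> I -> Prop), directed le ->
     forall (x : I -> V) (f : V), c I le x f -> c I le (fun i => - x i) (- f)) /\
  (forall (I : Type) (le : I -> I -> Prop), directed le ->
     forall (e f : I -> V), (forall i, vl_le (vabs (e i)) (vabs (f i))) ->
       c I le f 0 -> c I le e 0).

Definition continuous_op (A B : Type) (cA : net_conv A) (cB : net_conv B)
  (T : A -> B) : Prop :=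
  forall (I : Type) (le : I -> I -> Prop), directed le ->
  forall (x : I -> A) (f : A), cA I le x f -> cB I le (fun i => T (x i)) (T f).

Definition closed_in (A : Type) (c : net_conv A) (S : set A) : Prop :=
  forall (I : Type) (le : I -> I -> Prop), directed le ->
  forall (x : I -> A) (f : A), (forall i, S (x i)) -> c I le x f -> S f.

From HB Require Import structures.
From mathcomp Require Import all_boot all_order all_algebra.
From mathcomp Require Import classical_sets reals boolp.
Set Implicit Arguments. Unset Strict Implicit. Unset Printing Implicit Defensive.
Import Order.TTheory GRing.Theory Num.Theory.
Local Open Scope ring_scope.
Local Open Scope classical_set_scope.

(* For an ideal [S], order continuity of [T] on [S] amounts to: [D ↓ 0] in [S]
   implies [inf T(D) = 0] in [E] (for a net order converging to [f], the [d]
   such that the net eventually lies in [[f - d, f + d]] form such a [D]).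
   This property passes to smaller ideals, and from [F_u1], [F_u2] to
   [F_(u1+u2)] by the Riesz decomposition [d <= (d ∧ l u1) + (d ∧ l u2)] for
   [d <= l (u1 + u2)]; hence [H] is an ideal.  It is local, since [D] may be
   cut below any of its elements, so it holds on [H] itself.  For closedness,
   if [h_i -> h] with [h_i] in [H] and [D ↓ 0] in [F_|h|] lies below [n |h|],
   every lower bound of [T(D)] lies below [n T (|h| - |h_i|)^+], a positive
   net tending to [0]. *)

Local Notation "x <=v y" := (vl_le x y) (at level 70).

Lemma eventually_mono (I : Type) (le : I -> I -> Prop) (P Q : I -> Prop) :
  (forall i, P i -> Q i) -> eventually le P -> eventually le Q.
Proof. by move=> PQ [i0 h]; exists i0 => i /h /PQ. Qed.

Lemma eventually_and (I : Type) (le : I -> I -> Prop) (P Q : I -> Prop) :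
  directed le -> eventually le P -> eventually le Q ->
  eventually le (fun i => P i /\ Q i).
Proof.
move=> [_ [_ [le_trans le_ub]]] [a ha] [b hb]; have [k [ak bk]] := le_ub a b.
by exists k => i ki; split; [apply: ha | apply: hb]; apply: le_trans ki.
Qed.

Section VectorLattice.
Variables (R : realType) (V : vectorLattice R).
Implicit Types (x y z w u : V) (S D : set V).

Lemma vl_le_addl x y z : x <=v y -> z + x <=v z + y.
Proof. by move=> h; rewrite ![z + _]addrC; apply: vl_le_add. Qed.

Lemma vl_le_add2 x y z w : x <=v y -> z <=v w -> x + z <=v y + w.
Proof. by move=> h1 h2; apply: vl_le_trans (vl_le_add z h1) (vl_le_addl y h2). Qed.

Lemma vl_le_addr x y : 0 <=v y -> x <=v x + y.
Proof. by move=> /(vl_le_addl x); rewrite addr0. Qed.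

Lemma vl_subr_ge0 x y : 0 <=v y - x <-> x <=v y.
Proof.
by split=> [/(vl_le_add x)|/(vl_le_add (- x))]; rewrite ?add0r ?subrK ?subrr.
Qed.

Lemma vl_leBlDr x y z : x - y <=v z <-> x <=v z + y.
Proof.
by split=> [/(vl_le_add y)|/(vl_le_add (- y))]; rewrite ?subrK ?addrK.
Qed.

Lemma vl_leN2 x y : - x <=v - y <-> y <=v x.
Proof.
suff opp (a b : V) : a <=v b -> - b <=v - a.
  by split=> [/opp|/opp //]; rewrite !opprK.
move=> /(vl_le_add (- a - b)).
by rewrite addrA subrr add0r addrCA subrr addr0.
Qed.

Lemma vl_scale_ge0 (a : R) x : 0 <= a -> 0 <=v x -> 0 <=v a *: x.
Proof. by move=> a0 /(vl_le_scale a0); rewrite scaler0. Qed.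

Lemma vl_le_scale2r (a b : R) x : a <= b -> 0 <=v x -> a *: x <=v b *: x.
Proof.
move=> ab x0; have ba : 0 <= b - a by rewrite subr_ge0.
by have := vl_le_add (a *: x) (vl_scale_ge0 ba x0); rewrite add0r -scalerDl subrK.
Qed.

Definition vl_inf x y : V := - vl_sup (- x) (- y).

Lemma vl_inf_l x y : vl_inf x y <=v x.
Proof. by apply/vl_leN2; rewrite opprK; apply: vl_sup_l. Qed.

Lemma vl_inf_r x y : vl_inf x y <=v y.
Proof. by apply/vl_leN2; rewrite opprK; apply: vl_sup_r. Qed.

Lemma vl_inf_greatest w x y : w <=v x -> w <=v y -> w <=v vl_inf x y.
Proof.
by move=> /vl_leN2 wx /vl_leN2 wy; apply/vl_leN2; rewrite opprK; apply: vl_sup_least.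
Qed.

Lemma vl_inf_le2l x y z : x <=v y -> vl_inf x z <=v vl_inf y z.
Proof.
by move=> xy; apply: vl_inf_greatest (vl_inf_r _ _); apply: vl_le_trans (vl_inf_l _ _) xy.
Qed.

Definition vl_pos x : V := vl_sup x 0.

Lemma vl_pos_ge x : x <=v vl_pos x. Proof. exact: vl_sup_l. Qed.

Lemma vl_pos_ge0 x : 0 <=v vl_pos x. Proof. exact: vl_sup_r. Qed.

Lemma vabs_ge x : x <=v vabs x. Proof. exact: vl_sup_l. Qed.

Lemma vabs_geN x : - x <=v vabs x. Proof. exact: vl_sup_r. Qed.

Lemma vabs_leP x y : vabs x <=v y <-> - y <=v x /\ x <=v y.
Proof.
split=> [xy|[/vl_leN2 + xy]]; last by rewrite opprK => ?; apply: vl_sup_least.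
split; last exact: vl_le_trans (vabs_ge x) xy.
by apply/vl_leN2; rewrite opprK; apply: vl_le_trans (vabs_geN x) xy.
Qed.

(* [x + (- x) = 0] lies below [2 |x|]. *)
Lemma vabs_ge0 x : 0 <=v vabs x.
Proof.
have := vl_le_add2 (vabs_ge x) (vabs_geN x); rewrite subrr.
have i2 : 0 <= (2 : R)^-1 by rewrite invr_ge0 ler0n.
move/(vl_le_scale i2); rewrite scaler0 -mulr2n -scaler_nat scalerA.
by rewrite mulVf ?pnatr_eq0 // scale1r.
Qed.

Lemma vabs_id x : 0 <=v x -> vabs x = x.
Proof.
move=> x0; apply: vl_le_anti (vabs_ge x).
apply/vabs_leP; split; last exact: vl_le_refl.
by apply: (vl_le_trans _ x0); rewrite -oppr0; apply/vl_leN2.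
Qed.

Lemma vabsN x : vabs (- x) = vabs x.
Proof.
rewrite /vabs opprK.
by apply: vl_le_anti; apply: vl_sup_least; (apply: vl_sup_l || apply: vl_sup_r).
Qed.

Lemma vabs_triangle x y : vabs (x + y) <=v vabs x + vabs y.
Proof.
apply: vl_sup_least; first exact: vl_le_add2 (vabs_ge _) (vabs_ge _).
by rewrite opprD; apply: vl_le_add2 (vabs_geN _) (vabs_geN _).
Qed.

Lemma vabs_lerB_dist x y : vabs x - vabs y <=v vabs (x - y).
Proof. by apply/vl_leBlDr; rewrite -{1}(subrK y x); apply: vabs_triangle. Qed.

Lemma vabs_scale (a : R) x : vabs (a *: x) <=v `|a| *: vabs x.
Proof.
wlog a0 : a x / 0 <= a.
  move=> wlog_a; have [|/ltW a0] := leP 0 a; first exact: wlog_a.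
  have -> : a *: x = (- a) *: (- x) by rewrite scalerN scaleNr opprK.
  by rewrite -normrN -(vabsN x); apply: wlog_a; rewrite oppr_ge0.
rewrite ger0_norm //; apply: vl_sup_least; first exact: vl_le_scale a0 (vabs_ge x).
by rewrite -scalerN; apply: vl_le_scale a0 (vabs_geN x).
Qed.

Lemma vabs_subP x y d : vabs (x - y) <=v d <-> y - d <=v x /\ x <=v y + d.
Proof.
rewrite vabs_leP -[- d <=v _]vl_leN2 opprK opprB !vl_leBlDr ![d + _]addrC.
by rewrite -[y <=v x + d]vl_leBlDr.
Qed.

Lemma vl_le_infDr x y z : 0 <=v z -> x <=v y + z -> x <=v vl_inf x y + z.
Proof.
move=> z0 xyz; apply/vl_leBlDr; apply: vl_inf_greatest; last exact/vl_leBlDr.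
by apply/vl_leBlDr; apply: vl_le_addr.
Qed.

Lemma vl_le_infD x y z : 0 <=v x -> 0 <=v y -> 0 <=v z -> x <=v y + z ->
  x <=v vl_inf x y + vl_inf x z.
Proof.
move=> x0 y0 z0 xyz; rewrite addrC; apply/vl_leBlDr; apply: vl_inf_greatest.
  by apply/vl_leBlDr; apply: vl_le_addr; apply: vl_inf_greatest.
by apply/vl_leBlDr; rewrite addrC; apply: vl_le_infDr.
Qed.

Lemma ideal_solid S y s : ideal S -> S s -> 0 <=v y -> y <=v s -> S y.
Proof.
move=> [_ [_ [_ Ssol]]] Ss y0 ys; apply: Ssol Ss _.
by rewrite vabs_id //; apply: vl_le_trans ys (vabs_ge s).
Qed.

Lemma ideal_principal_sub S u : ideal S -> S u -> principal_ideal (vabs u) `<=` S.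
Proof.
move=> [S0 [_ [SZ Ssol]]] Su _ [l [_ [y [yl [yu ->]]]]]; apply: SZ; apply: Ssol Su _.
by apply/vabs_leP.
Qed.

Lemma principal_idealP u x : 0 <=v u ->
  principal_ideal u x <-> exists2 l : R, 0 <= l & vabs x <=v l *: u.
Proof.
move=> u0; split=> [[l [l0 [y [yl [yu ->]]]]]|[l l0 xl]].
  exists l => //; apply: vl_le_trans (vabs_scale l y) _; rewrite ger0_norm //.
  exact/vl_le_scale/vabs_leP.
have l1_gt0 : 0 < l + 1 by rewrite ltr_wpDl.
have l1_ge0 := ltW l1_gt0; have l1_neq0 := lt0r_neq0 l1_gt0.
have /vabs_leP[xl1 xl2] : vabs x <=v (l + 1) *: u.
  by apply: vl_le_trans xl (vl_le_scale2r _ u0); rewrite lerDl.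
exists (l + 1); split => //; exists ((l + 1)^-1 *: x).
have unscale v : (l + 1)^-1 *: ((l + 1) *: v) = v by rewrite scalerA mulVf // scale1r.
have il1_ge0 : 0 <= (l + 1)^-1 by rewrite invr_ge0.
split; first by rewrite -[u in - u]unscale -scalerN; apply: vl_le_scale.
split; first by rewrite -[u in _ <=v u]unscale; apply: vl_le_scale.
by rewrite scalerA mulfV // scale1r.
Qed.

Lemma principal_ideal_ideal u : 0 <=v u -> ideal (principal_ideal u).
Proof.
move=> u0; have piP := principal_idealP _ u0.
split; [|split; [|split]].
- apply/piP; exists 0 => //; rewrite scale0r vabs_id; exact: vl_le_refl.
- move=> x y /piP[l1 l10 x1] /piP[l2 l20 y2]; apply/piP; exists (l1 + l2).
    exact: addr_ge0.
  by rewrite scalerDl; apply: vl_le_trans (vabs_triangle x y) (vl_le_add2 x1 y2).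
- move=> a x /piP[l l0 xl]; apply/piP; exists (`|a| * l); first exact: mulr_ge0.
  by rewrite -scalerA; apply: vl_le_trans (vabs_scale a x) (vl_le_scale _ xl).
- by move=> x y /piP[l l0 yl] xy; apply/piP; exists l => //; apply: vl_le_trans xy yl.
Qed.

Lemma principal_ideal_self u : 0 <=v u -> principal_ideal u u.
Proof.
move=> u0; apply/principal_idealP => //; exists 1 => //.
by rewrite scale1r vabs_id //; apply: vl_le_refl.
Qed.

Definition down_directed D : Prop :=
  forall d1 d2, D d1 -> D d2 -> exists2 d, D d & d <=v d1 /\ d <=v d2.

Definition down_to0 S D : Prop :=
  [/\ D `<=` S, D !=set0, (forall d, D d -> 0 <=v d), down_directed D &
      forall w, S w -> (forall d, D d -> w <=v d) -> w <=v 0].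

(* In an ideal the restriction [S w] on the lower bounds is harmless:
   the positive part of any lower bound lies below an element of [D]. *)
Lemma down_to0_lb_le0 S D w : ideal S -> down_to0 S D ->
  (forall d, D d -> w <=v d) -> w <=v 0.
Proof.
move=> idS [DS [d0 Dd0] Dge0 _ Dinf] wD.
have wpD d : D d -> vl_pos w <=v d.
  by move=> Dd; apply: vl_sup_least (wD _ Dd) (Dge0 _ Dd).
apply: vl_le_trans (vl_pos_ge w) (Dinf _ _ wpD).
exact: ideal_solid idS (DS _ Dd0) (vl_pos_ge0 w) (wpD _ Dd0).
Qed.

Lemma down_to0_sub S S' D : ideal S' -> S' `<=` S -> down_to0 S' D -> down_to0 S D.
Proof.
move=> idS' S'S Dt; have [DS' D_neq0 Dge0 Ddir _] := Dt.
split=> // [d /DS' /S'S //|w _]; exact: down_to0_lb_le0 idS' Dt.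
Qed.

Lemma down_to0_below S S' D d0 : ideal S -> down_to0 S D -> D d0 ->
  (forall d, D d -> d <=v d0 -> S' d) -> down_to0 S' [set d | D d /\ d <=v d0].
Proof.
move=> idS Dt Dd0 DS'; have [_ _ Dge0 Ddir _] := Dt.
split.
- by move=> d [Dd dd0]; apply: DS'.
- by exists d0; split => //; apply: vl_le_refl.
- by move=> d [Dd _]; apply: Dge0.
- move=> d1 d2 [D1 d10] [D2 _]; have [d D_d [dd1 dd2]] := Ddir _ _ D1 D2.
  by exists d => //; split => //; apply: vl_le_trans dd1 d10.
- move=> w _ wD; apply: down_to0_lb_le0 idS Dt _ => d Dd.
  have [d' D_d' [d'd d'd0]] := Ddir _ _ Dd Dd0.
  by apply: vl_le_trans (wD d' _) d'd.
Qed.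

Lemma down_to0_inf S S' D b : ideal S -> down_to0 S D -> 0 <=v b ->
  (forall d, D d -> S' (vl_inf d b)) -> down_to0 S' [set vl_inf d b | d in D].
Proof.
move=> idS Dt b0 DS'; have [_ [d0 Dd0] Dge0 Ddir _] := Dt.
split.
- by move=> _ [d Dd <-]; apply: DS'.
- by exists (vl_inf d0 b), d0.
- by move=> _ [d Dd <-]; apply: vl_inf_greatest (Dge0 _ Dd) b0.
- move=> _ _ [d1 D1 <-] [d2 D2 <-]; have [d D_d [dd1 dd2]] := Ddir _ _ D1 D2.
  by exists (vl_inf d b); [exists d | split; apply: vl_inf_le2l].
- move=> w _ wD; apply: down_to0_lb_le0 idS Dt _ => d Dd.
  by apply: vl_le_trans (wD _ _) (vl_inf_l d b); exists d.
Qed.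

Definition oconv_tube S (I : Type) (le : I -> I -> Prop) (x : I -> V) f : set V :=
  [set d | S d /\ 0 <=v d /\ eventually le (fun i => vabs (x i - f) <=v d)].

Lemma oconv_down_to0 S (I : Type) (le : I -> I -> Prop) (x : I -> V) f :
  ideal S -> directed le -> (forall i, S (x i)) -> S f -> oconv_in S le x f ->
  down_to0 S (oconv_tube S le x f).
Proof.
move=> idS dir Sx Sf [G [GS [[_ [Gge0 Ginf]] Gev]]].
have GD : G `<=` oconv_tube S le x f.
  move=> g Gg; split; first exact: GS.
  by split; [exact: Gge0 | apply: eventually_mono (Gev _ Gg) => i /vabs_subP].
split.
- by move=> d [].
- have [[g Gg]|noG] := pselect (G !=set0); first by exists g; apply: GD.
  (* the infimum of the empty set being [0], [S] is [{0}] *)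
  have [S0 [_ [SZ _]]] := idS.
  have S_eq0 w : S w -> w = 0.
    have S_le0 v : S v -> v <=v 0.
      by move=> Sv; apply: Ginf => // g Gg; case: noG; exists g.
    move=> Sw; apply: vl_le_anti (S_le0 _ Sw) _; apply/vl_leN2.
    by rewrite oppr0 -scaleN1r; apply: S_le0; apply: SZ.
  have [[i0 _] _] := dir; exists 0; split => //; split; first exact: vl_le_refl.
  exists i0 => i _.
  by rewrite (S_eq0 _ (Sx i)) (S_eq0 _ Sf) subr0 vabs_id; apply: vl_le_refl.
- by move=> d [_ []].
- move=> d1 d2 [S1 [d10 ev1]] [_ [d20 ev2]]; exists (vl_inf d1 d2).
    have d0 := vl_inf_greatest d10 d20.
    split; first exact: ideal_solid idS S1 d0 (vl_inf_l _ _).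
    split=> //; apply: eventually_mono (eventually_and dir ev1 ev2) => i [].
    exact: vl_inf_greatest.
  by split; [apply: vl_inf_l | apply: vl_inf_r].
- by move=> w Sw wD; apply: Ginf => // g Gg; apply/wD/GD.
Qed.

End VectorLattice.

Section PositiveOperator.
Variables (R : realType) (F E : vectorLattice R) (T : {linear F -> E}).
Hypothesis Tpos : positive_op T.

Lemma positive_op_le x y : x <=v y -> T x <=v T y.
Proof. by move=> /vl_subr_ge0 /Tpos; rewrite linearB => /vl_subr_ge0. Qed.

(* [D ↓ 0] in [S] implies [inf T(D) = 0] in [E]; as [T(D)] is positive, only
   its lower bounds need to be checked. *)
Definition down_continuous (S : set F) : Prop :=
  forall D, down_to0 S D -> forall z : E, (forall d, D d -> z <=v T d) -> z <=v 0.

Lemma down_continuous_of_oc (S : set F) :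
  S 0 -> order_continuous_on T S -> down_continuous S.
Proof.
move=> S0 ocS D [DS [d0 Dd0] Dge0 Ddir Dinf] z zD.
pose le (a b : {d | D d}) := sval b <=v sval a.
have dir : directed le.
  split; first by exists (exist _ d0 Dd0).
  split; first by move=> i; apply: vl_le_refl.
  split; first by move=> i j k ij jk; apply: vl_le_trans jk ij.
  move=> [a Da] [b Db]; have [c Dc [ca cb]] := Ddir a b Da Db.
  by exists (exist _ c Dc).
have Dcvg : oconv_in S le sval 0.
  exists D; split=> //; split; first by split.
  move=> g Dg; exists (exist _ g Dg) => -[d Dd] /= dg; rewrite !add0r; split=> //.
  by apply: vl_le_trans (Dge0 _ Dd); rewrite -oppr0; apply/vl_leN2/Dge0.
have [G [_ [[_ [_ Ginf]] Gev]]] := ocS _ _ dir _ _ (fun i => DS _ (svalP i)) S0 Dcvg.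
apply: Ginf => // g Gg; have [[d Dd] ev] := Gev g Gg.
have [_] := ev _ (vl_le_refl _); rewrite linear0 add0r.
exact: vl_le_trans (zD _ Dd).
Qed.

Lemma oc_of_down_continuous (S : set F) :
  ideal S -> down_continuous S -> order_continuous_on T S.
Proof.
move=> idS dcS I le dir x f Sx Sf xf; have Dt := oconv_down_to0 idS dir Sx Sf xf.
exists (T @` oconv_tube S le x f); split=> //; split.
  split=> //; split; first by move=> _ [d [_ [d0 _]] <-]; apply: Tpos.
  by move=> w _ wTD; apply: dcS Dt _ _ => d Dd; apply/wTD/imageP.
move=> _ [d [_ [_ ev]] <-]; apply: eventually_mono ev => i /vabs_subP[lo hi].
by rewrite -linearB -linearD; split; apply: positive_op_le.
Qed.

Lemma down_continuous_sub (S S' : set F) :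
  ideal S' -> S' `<=` S -> down_continuous S -> down_continuous S'.
Proof. by move=> idS' S'S dcS D /(down_to0_sub idS' S'S); apply: dcS. Qed.

Lemma down_continuous_principal_local (S : set F) : ideal S ->
  (forall s, S s -> 0 <=v s -> down_continuous (principal_ideal s)) ->
  down_continuous S.
Proof.
move=> idS dcS D Dt z zD; have [DS [d0 Dd0] Dge0 _ _] := Dt.
have d00 := Dge0 _ Dd0.
apply: (dcS d0 (DS _ Dd0) d00 [set d | D d /\ d <=v d0]); last by move=> d [/zD].
apply: down_to0_below idS Dt Dd0 _ => d Dd dd0.
exact: ideal_solid (principal_ideal_ideal d00) (principal_ideal_self d00) (Dge0 _ Dd) dd0.
Qed.

Lemma down_continuous_principal_bounded (u : F) : 0 <=v u ->
  (forall D (l : R) (z : E), down_to0 (principal_ideal u) D -> 0 <= l ->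
     (forall d, D d -> d <=v l *: u) -> (forall d, D d -> z <=v T d) -> z <=v 0) ->
  down_continuous (principal_ideal u).
Proof.
move=> u0 bdd D Dt z zD; have [DS [d0 Dd0] _ _ _] := Dt.
have [l l0 d0l] := (principal_idealP _ u0).1 (DS _ Dd0).
apply: (bdd [set d | D d /\ d <=v d0] l) => //; last by move=> d [/zD].
- exact: down_to0_below (principal_ideal_ideal u0) Dt Dd0 (fun d Dd _ => DS _ Dd).
- by move=> d [_ dd0]; apply: vl_le_trans dd0 (vl_le_trans (vabs_ge d0) d0l).
Qed.

(* [{d ∧ l a | d in D} ↓ 0] in [F_a]. *)
Lemma down_continuous_inf_lb (S : set F) D (a : F) (l : R) (z c : E) :
  ideal S -> down_to0 S D -> 0 <=v a -> down_continuous (principal_ideal a) ->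
  0 <= l -> (forall d, D d -> z <=v T (vl_inf d (l *: a)) + c) -> z <=v c.
Proof.
move=> idS Dt a0 dca l0 zD; have [_ _ Dge0 _ _] := Dt.
have la0 : 0 <=v l *: a := vl_scale_ge0 l0 a0.
have [_ [_ [aZ _]]] := principal_ideal_ideal a0.
suff : z - c <=v 0 by move/vl_leBlDr; rewrite add0r.
apply: (dca [set vl_inf d (l *: a) | d in D]); last first.
  by move=> _ [d Dd <-]; apply/vl_leBlDr/zD.
apply: (down_to0_inf idS Dt la0) => d Dd.
apply: ideal_solid (principal_ideal_ideal a0) _ _ (vl_inf_r _ _).
  exact/aZ/principal_ideal_self.
exact: vl_inf_greatest (Dge0 _ Dd) la0.
Qed.

Lemma down_continuous_principal0 : down_continuous (principal_ideal 0).
Proof.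
move=> D [DS [d0 Dd0] Dge0 _ _] z zD.
have [l _] := (principal_idealP _ (vl_le_refl 0)).1 (DS _ Dd0).
rewrite scaler0 => d0_le0.
have d0_eq0 : d0 = 0 := vl_le_anti (vl_le_trans (vabs_ge d0) d0_le0) (Dge0 _ Dd0).
by have := zD _ Dd0; rewrite d0_eq0 linear0.
Qed.

Lemma down_continuous_principalD (u1 u2 : F) : 0 <=v u1 -> 0 <=v u2 ->
  down_continuous (principal_ideal u1) -> down_continuous (principal_ideal u2) ->
  down_continuous (principal_ideal (u1 + u2)).
Proof.
move=> u10 u20 dc1 dc2; have := vl_le_add2 u10 u20; rewrite addr0 => u0.
apply: (down_continuous_principal_bounded u0) => D l z Dt l0 Dle zD.
have idu := principal_ideal_ideal u0; have [_ _ Dge0 Ddir _] := Dt.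
have zD2 d' : D d' -> z <=v T (vl_inf d' (l *: u2)).
  move=> Dd'; apply: (down_continuous_inf_lb idu Dt u10 dc1 l0) => d Dd.
  have [e De [ed ed']] := Ddir _ _ Dd Dd'.
  apply: vl_le_trans (zD _ De) _; rewrite -linearD; apply: positive_op_le.
  have le_e_sum : e <=v l *: u1 + l *: u2 by rewrite -scalerDr; apply: Dle.
  apply: vl_le_trans (vl_le_infD (Dge0 _ De) _ _ le_e_sum) _; try exact: vl_scale_ge0.
  by apply: vl_le_add2; apply: vl_inf_le2l.
have := down_continuous_inf_lb idu Dt u20 dc2 l0 (z := z) (c := 0).
by apply=> d Dd; rewrite addr0; apply: zD2.
Qed.

Lemma down_continuous_defect (S : set F) D (a b : F) (l : R) (z : E) :
  ideal S -> down_to0 S D -> 0 <=v a -> down_continuous (principal_ideal a) ->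
  0 <= l -> (forall d, D d -> d <=v l *: b) -> (forall d, D d -> z <=v T d) ->
  z <=v l *: T (vl_pos (b - a)).
Proof.
move=> idS Dt a0 dca l0 Dle zD.
apply: (down_continuous_inf_lb idS Dt a0 dca l0) => d Dd.
apply: vl_le_trans (zD _ Dd) _; rewrite -linearZ -linearD; apply: positive_op_le.
apply: vl_le_infDr; first exact: vl_scale_ge0 l0 (vl_pos_ge0 _).
rewrite -scalerDr; apply: vl_le_trans (Dle _ Dd) (vl_le_scale l0 _).
by rewrite addrC -vl_leBlDr; apply: vl_pos_ge.
Qed.

End PositiveOperator.

Section LocallySolidConvergence.
Variables (R : realType) (V : vectorLattice R) (c : net_conv V).
Arguments c : clear implicits.
Hypotheses (convc : is_convergence c) (lsc : locally_solid_additive c).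
Variables (I : Type) (le : I -> I -> Prop).
Hypothesis dir : directed le.

Lemma ls_cvg_muln (x : I -> V) n : c I le x 0 -> c I le (fun i => x i *+ n) 0.
Proof.
move=> x0; elim: n => [|n IHn].
  rewrite (_ : (fun _ => _) = fun=> 0); first exact: convc.
  by apply: funext => i; rewrite mulr0n.
rewrite (_ : (fun _ => _) = fun i => x i + x i *+ n); last first.
  by apply: funext => i; rewrite mulrS.
by have := lsc.1 _ _ dir _ _ _ _ x0 IHn; rewrite addr0.
Qed.

Lemma ls_cvg_pos_sub_abs (x : I -> V) f :
  c I le x f -> c I le (fun i => vl_pos (vabs f - vabs (x i))) 0.
Proof.
move=> xf; have := lsc.1 _ _ dir _ _ _ _ xf (convc dir (- f)); rewrite subrr => xf0.
apply: lsc.2.2 _ _ dir _ _ _ xf0 => i; rewrite vabs_id; last exact: vl_pos_ge0.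
apply: vl_sup_least (vabs_ge0 _); rewrite -(vabsN (x i - f)) opprB; exact: vabs_lerB_dist.
Qed.

(* The positive part of [z], dominated by the net, converges to [0] as a
   constant net. *)
Lemma ls_lb_le0 (x : I -> V) z : hausdorff c -> c I le x 0 ->
  (forall i, 0 <=v x i) -> (forall i, z <=v x i) -> z <=v 0.
Proof.
move=> haus x0 xge0 zx.
have zp0 : c I le (fun _ => vl_pos z) 0.
  apply: lsc.2.2 _ _ dir _ _ _ x0 => i.
  by rewrite (vabs_id (vl_pos_ge0 z)) vabs_id //; apply: vl_sup_least.
by rewrite -(haus _ _ dir _ _ _ (convc dir (vl_pos z)) zp0); apply: vl_pos_ge.
Qed.

End LocallySolidConvergence.

Section OrderContinuityIdeal.
Variables (R : realType) (F E : vectorLattice R) (T : {linear F -> E}).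
Hypothesis Tpos : positive_op T.

Definition oc_ideal : set F :=
  [set h | order_continuous_on T (principal_ideal (vabs h))].

Lemma oc_idealP h : oc_ideal h <-> down_continuous T (principal_ideal (vabs h)).
Proof.
have idh := principal_ideal_ideal (vabs_ge0 h).
by split; [apply: down_continuous_of_oc; case: idh | apply: oc_of_down_continuous].
Qed.

Lemma oc_ideal_dominated (u x : F) (c : R) : 0 <=v u -> 0 <= c ->
  vabs x <=v c *: u -> down_continuous T (principal_ideal u) -> oc_ideal x.
Proof.
move=> u0 c0 xu dcu; apply/oc_idealP.
apply: down_continuous_sub (principal_ideal_ideal (vabs_ge0 x)) _ dcu.
apply: ideal_principal_sub (principal_ideal_ideal u0) _.
by apply/principal_idealP => //; exists c.
Qed.

Lemma oc_ideal_ideal : ideal oc_ideal.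
Proof.
split; [|split; [|split]].
- apply: (oc_ideal_dominated (vl_le_refl (0 : F)) (lexx (0 : R))).
    by rewrite vabs_id ?scaler0; apply: vl_le_refl.
  exact: down_continuous_principal0.
- move=> x y /oc_idealP dcx /oc_idealP dcy.
  have xy0 := vl_le_add2 (vabs_ge0 x) (vabs_ge0 y); rewrite addr0 in xy0.
  have := down_continuous_principalD Tpos (vabs_ge0 x) (vabs_ge0 y) dcx dcy.
  by apply: oc_ideal_dominated xy0 ler01 _; rewrite scale1r; apply: vabs_triangle.
- move=> a x /oc_idealP dcx.
  exact: oc_ideal_dominated (vabs_ge0 x) (normr_ge0 a) (vabs_scale a x) dcx.
- move=> x y /oc_idealP dcy xy.
  by apply: oc_ideal_dominated (vabs_ge0 y) ler01 _ dcy; rewrite scale1r.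
Qed.

Lemma oc_ideal_oc : order_continuous_on T oc_ideal.
Proof.
apply: (oc_of_down_continuous Tpos oc_ideal_ideal).
apply: (down_continuous_principal_local oc_ideal_ideal) => s /oc_idealP.
by move=> + s0; rewrite vabs_id.
Qed.

Lemma oc_ideal_closed (cF : net_conv F) (cE : net_conv E) :
  is_convergence cF -> is_convergence cE ->
  locally_solid_additive cF -> locally_solid_additive cE ->
  hausdorff cE -> continuous_op cF cE T -> closed_in cF oc_ideal.
Proof.
move=> convF convE lsF lsE haus Tc I le dir x h Hx xh.
have h0 := vabs_ge0 h.
apply/oc_idealP; apply: (down_continuous_principal_bounded h0) => D l z Dt l0 Dle zD.
have [n ln] : exists n : nat, l <= n%:R.
  by exists (Num.Def.archi_bound l); apply/ltW/archi_boundP.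
pose p i := T (vl_pos (vabs h - vabs (x i))).
have p_ge0 i : 0 <=v p i *+ n.
  by rewrite -scaler_nat; apply: vl_scale_ge0 (ler0n _ _) (Tpos (vl_pos_ge0 _)).
apply: (ls_lb_le0 convE lsE dir haus _ p_ge0).
  apply: (ls_cvg_muln convE lsE dir (x := p)).
  by have := Tc _ _ dir _ _ (ls_cvg_pos_sub_abs convF lsF dir xh); rewrite linear0.
move=> i; rewrite -scaler_nat.
have /oc_idealP dc_i := Hx i.
apply: (down_continuous_defect Tpos (principal_ideal_ideal h0) Dt (vabs_ge0 _) dc_i)
  (ler0n _ _) _ zD.
by move=> d Dd; apply: vl_le_trans (Dle _ Dd) (vl_le_scale2r ln h0).
Qed.

End OrderContinuityIdeal.

Theorem proposition8p1 (R : realType) (F E : vectorLattice R)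
  (archF : archimedean F) (archE : archimedean E)
  (cF : net_conv F) (cE : net_conv E)
  (convF : is_convergence cF) (convE : is_convergence cE)
  (lsF : locally_solid_additive cF) (lsE : locally_solid_additive cE)
  (T : {linear F -> E}) (Tpos : positive_op T) :
  let H := [set h : F | order_continuous_on T (principal_ideal (vabs h))] in
  ideal H /\ order_continuous_on T H /\
  (hausdorff cE -> continuous_op cF cE T -> closed_in cF H).
Proof.
move=> H; split; first exact: oc_ideal_ideal Tpos.
split; first exact: oc_ideal_oc Tpos.
exact: (oc_ideal_closed Tpos convF convE lsF lsE).
Qed.
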